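(* Let $0\le\alpha\le\beta\le\pi/2$, $P_1,P_2>0$, and define $\mathcal R(\theta)$ as in the context. Then the maximum of $R_1$ over $\bigcup_{\theta\in[\alpha,\beta]}\mathcal R(\theta)$ equals $\mathcal C(\phi_1(\alpha))$ and the maximum of $R_2$ over this set equals $\mathcal C(\phi_2(\beta))$.
   Context: $\mathcal C(x)=\frac12\log_2(1+x)$, $\phi_1(\theta)=P_1\cos^2(\theta-\alpha)$, $\phi_2(\theta)=P_2\cos^2(\theta-\beta)$, $\phi=\phi_1+\phi_2$, and $\mathcal R(\theta)=\{(R_1,R_2)\ge0:R_1\le\mathcal C(\phi_1(\theta)),R_2\le\mathcal C(\phi_2(\theta)),R_1+R_2\le\mathcal C(\phi(\theta))\}$. (In the two-hop MAC, $P_i=\|\mathbf h_{0i}\|^2P_{S_i}$ and $\bigcup_{\theta\in[\alpha,\beta]}\mathcal R(\theta)$ is the first outer bound.) *)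

From Stdlib Require Import Reals.
Open Scope R_scope.

Definition log2 (x : R) : R := ln x / ln 2.

Definition Cap (x : R) : R := / 2 * log2 (1 + x).

Definition phi1 (P1 alpha theta : R) : R := P1 * (cos (theta - alpha)) ^ 2.
Definition phi2 (P2 beta theta : R) : R := P2 * (cos (theta - beta)) ^ 2.
Definition phi (P1 P2 alpha beta theta : R) : R :=
  phi1 P1 alpha theta + phi2 P2 beta theta.

Definition region (P1 P2 alpha beta theta : R) (R1 R2 : R) : Prop :=
  0 <= R1 /\ 0 <= R2 /\
  R1 <= Cap (phi1 P1 alpha theta) /\
  R2 <= Cap (phi2 P2 beta theta) /\
  R1 + R2 <= Cap (phi P1 P2 alpha beta theta).

Definition union_region (P1 P2 alpha beta : R) (R1 R2 : R) : Prop :=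
  exists theta, alpha <= theta <= beta /\ region P1 P2 alpha beta theta R1 R2.

Definition is_max_over (S : R -> R -> Prop) (f : R -> R -> R) (m : R) : Prop :=
  (exists R1 R2, S R1 R2 /\ f R1 R2 = m) /\
  (forall R1 R2, S R1 R2 -> f R1 R2 <= m).

From Stdlib Require Import Reals Lra.
Open Scope R_scope.

(* Each single-user rate is bounded by its own capacity, which is largest when
   the beam points at that user ([theta = alpha], resp. [theta = beta]),
   where cos^2 = 1; there the corner point with the other rate 0 lies in
   the region, since the sum-rate bound only grows with the other user's power. *)

Lemma ln2_pos : 0 < ln 2.
Proof. rewrite <- ln_1; apply ln_increasing; lra. Qed.

Lemma Cap_le x y : 0 <= x -> x <= y -> Cap x <= Cap y.
Proof.
  intros hx hxy; unfold Cap, log2.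
  assert (hln : ln (1 + x) <= ln (1 + y)).
  { destruct (Req_dec x y) as [-> | hne]; [lra |].
    left; apply ln_increasing; lra. }
  pose proof ln2_pos.
  apply Rmult_le_compat_l; [lra |].
  apply Rmult_le_compat_r; [left; apply Rinv_0_lt_compat |]; lra.
Qed.

Lemma Cap_0 : Cap 0 = 0.
Proof. unfold Cap, log2; rewrite Rplus_0_r, ln_1; field; pose proof ln2_pos; lra. Qed.

Lemma Cap_ge0 x : 0 <= x -> 0 <= Cap x.
Proof. intro hx; rewrite <- Cap_0; apply Cap_le; lra. Qed.

Lemma scaled_cos2_bounds P t : 0 <= P -> 0 <= P * cos t ^ 2 <= P.
Proof.
  intro hP; pose proof (COS_bound t) as hc.
  assert (h2 : 0 <= cos t ^ 2 <= 1) by (split; nra).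
  split; nra.
Qed.

Lemma scaled_cos2_diag P a : P * cos (a - a) ^ 2 = P.
Proof. rewrite Rminus_diag, cos_0; ring. Qed.

Section Corners.

Variables P1 P2 alpha beta : R.
Hypotheses (hP1 : 0 < P1) (hP2 : 0 < P2) (hab : alpha <= beta).

Lemma union_region_R1_le R1 R2 :
  union_region P1 P2 alpha beta R1 R2 -> R1 <= Cap (phi1 P1 alpha alpha).
Proof.
  intros [t [_ [_ [_ [h _]]]]].
  apply (Rle_trans _ _ _ h); unfold phi1; rewrite scaled_cos2_diag.
  apply Cap_le; apply scaled_cos2_bounds; lra.
Qed.

Lemma union_region_R2_le R1 R2 :
  union_region P1 P2 alpha beta R1 R2 -> R2 <= Cap (phi2 P2 beta beta).
Proof.
  intros [t [_ [_ [_ [_ [h _]]]]]].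
  apply (Rle_trans _ _ _ h); unfold phi2; rewrite scaled_cos2_diag.
  apply Cap_le; apply scaled_cos2_bounds; lra.
Qed.

Lemma union_region_corner1 :
  union_region P1 P2 alpha beta (Cap (phi1 P1 alpha alpha)) 0.
Proof.
  exists alpha; split; [lra |].
  pose proof (scaled_cos2_bounds P2 (alpha - beta) (Rlt_le _ _ hP2)).
  unfold region, phi, phi1, phi2; rewrite scaled_cos2_diag.
  repeat split; try lra; try (apply Cap_ge0; lra).
  rewrite Rplus_0_r; apply Cap_le; lra.
Qed.

Lemma union_region_corner2 :
  union_region P1 P2 alpha beta 0 (Cap (phi2 P2 beta beta)).
Proof.
  exists beta; split; [lra |].
  pose proof (scaled_cos2_bounds P1 (beta - alpha) (Rlt_le _ _ hP1)).
  unfold region, phi, phi1, phi2; rewrite scaled_cos2_diag.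
  repeat split; try lra; try (apply Cap_ge0; lra).
  rewrite Rplus_0_l; apply Cap_le; lra.
Qed.

End Corners.

Theorem lemma6 (alpha beta P1 P2 : R)
  (h0a : 0 <= alpha) (hab : alpha <= beta) (hb : beta <= PI / 2)
  (hP1 : 0 < P1) (hP2 : 0 < P2) :
  is_max_over (union_region P1 P2 alpha beta) (fun R1 _ => R1)
    (Cap (phi1 P1 alpha alpha)) /\
  is_max_over (union_region P1 P2 alpha beta) (fun _ R2 => R2)
    (Cap (phi2 P2 beta beta)).
Proof.
  split; split.
  - exists (Cap (phi1 P1 alpha alpha)), 0.
    split; [now apply union_region_corner1 | reflexivity].
  - intros R1 R2; now apply union_region_R1_le.
  - exists 0, (Cap (phi2 P2 beta beta)).
    split; [now apply union_region_corner2 | reflexivity].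
  - intros R1 R2; now apply union_region_R2_le.
Qed.
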